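(* Let $M$ be a system execution satisfying the Lazy Set axioms A0, A1, A2, and let $\Rightarrow$ be the relation defined in the context. Then the relation $<'\;=\;(<\cup\Rightarrow)$ (i.e. $a<'b$ iff $a<b$ or $a\Rightarrow b$) contains no cycles: there is no sequence of events $X_0<'X_1<'\cdots<'X_n$ with $n\ge1$ and $X_0=X_n$.
   Context: A system execution $M$ consists of: a set of events, partitioned into low-level events (actions) and high-level events; unary predicates $\mathrm{Add},\mathrm{Rem},\mathrm{Cnt}$ on events; a partial order $<$ on events in which every event has finitely many predecessors (and Lamport's finiteness property: for every event $x$ there is a finite set $E$ with $x<y$ for all events $y\notin E$); functions $\mathrm{Begin},\mathrm{End}$ from events to actions with $\mathrm{Begin}(e)=\mathrm{End}(e)=e$ for actions $e$; functions $\chi$ (events $\to\{0,1,f\}$), $\mathrm{val}$ (events $\to\mathbb N$), $\gamma$ (events $\to$ events). For events $X,Y$, $X<Y$ iff $\mathrm{End}(X)<\mathrm{Begin}(Y)$. Notation: $\mathrm{Add}^p(a)$ abbreviates $\mathrm{Add}(a)\wedge\chi(a)=p$, similarly $\mathrm{Rem}^p,\mathrm{Cnt}^p$; $\mathrm{Op}^p(a)$ abbreviates $(\mathrm{Add}(a)\vee\mathrm{Rem}(a)\vee\mathrm{Cnt}(a))\wedge\chi(a)=p$ for $p\in\{0,1\}$. A0: $\mathrm{Add},\mathrm{Rem},\mathrm{Cnt}$ pairwise disjoint; $\mathrm{Add},\mathrm{Rem}$ events are actions, $\mathrm{Cnt}$ events are high-level; $\mathrm{Begin}(X),\mathrm{End}(X)$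 are actions; for $\mathrm{Cnt}$ events $E$, $\mathrm{Begin}(E)<\mathrm{End}(E)$; $<$ restricted to actions is linear. A1: for every $A$ with $\mathrm{Op}^1(A)$: $\mathrm{Add}^0(\gamma(A))$, $\mathrm{val}(\gamma(A))=\mathrm{val}(A)$, $\gamma(A)<\mathrm{End}(A)$, and no $R$ has $\mathrm{Rem}^1(R)$, $\gamma(R)=\gamma(A)$, $\gamma(A)<R<A$. A2: if $\mathrm{Op}^0(B)$, $\mathrm{Add}^0(A)$, $A<B$, $\mathrm{val}(A)=\mathrm{val}(B)$, then some $R$ has $\mathrm{Rem}^1(R)$, $A=\gamma(R)$, $R<\mathrm{End}(B)$. The relation $\Rightarrow$ on events holds exactly in the following cases: (1) for every $\mathrm{Cnt}^1$ event $C$: $\gamma(C)\Rightarrow C$, and $C\Rightarrow R$ for every $R$ with $\mathrm{Rem}^1(R)$ and $\gamma(R)=\gamma(C)$; (2) $R\Rightarrow C$ whenever $\mathrm{Cnt}^0(C)$, $\mathrm{Rem}^1(R)$, $\mathrm{val}(R)=\mathrm{val}(C)$, not $C<R$, and $\gamma(R)<C$; (3) $C\Rightarrow A$ whenever $\mathrm{Cnt}^0(C)$, $\mathrm{Add}^0(A)$, $\mathrm{val}(C)=\mathrm{val}(A)$ and not $A<C$. *)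

From Stdlib Require Import List Arith.

Inductive chival : Type := c0 | c1 | cf.

Record SysExec : Type := {
  Ev : Type;
  Act : Ev -> Prop;               (* low-level events (actions); the others are high-level *)
  Add : Ev -> Prop;
  Rem : Ev -> Prop;
  Cnt : Ev -> Prop;
  lt : Ev -> Ev -> Prop;
  Begin : Ev -> Ev;
  End : Ev -> Ev;
  chi : Ev -> chival;
  val : Ev -> nat;
  gamma : Ev -> Ev
}.

Section LazySet.
Variable M : SysExec.
Local Notation E := (Ev M).
Local Notation "x < y" := (lt M x y).

Definition system_execution : Prop :=
  (forall x, ~ x < x) /\
  (forall x y z, x < y -> y < z -> x < z) /\
  (forall x, exists l : list E, forall y, y < x -> In y l) /\
  (forall x, exists l : list E, forall y, ~ In y l -> x < y) /\
  (forall e, Act M e -> Begin M e = e /\ End M e = e) /\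
  (forall X Y, X < Y <-> End M X < Begin M Y).

Definition AddP p a := Add M a /\ chi M a = p.
Definition RemP p a := Rem M a /\ chi M a = p.
Definition CntP p a := Cnt M a /\ chi M a = p.
Definition OpP p a := (Add M a \/ Rem M a \/ Cnt M a) /\ chi M a = p.

Definition A0 : Prop :=
  (forall a, ~ (Add M a /\ Rem M a)) /\
  (forall a, ~ (Add M a /\ Cnt M a)) /\
  (forall a, ~ (Rem M a /\ Cnt M a)) /\
  (forall a, Add M a -> Act M a) /\
  (forall a, Rem M a -> Act M a) /\
  (forall a, Cnt M a -> ~ Act M a) /\
  (forall X, Act M (Begin M X) /\ Act M (End M X)) /\
  (forall e, Cnt M e -> Begin M e < End M e) /\
  (forall a b, Act M a -> Act M b -> a < b \/ a = b \/ b < a).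

Definition A1 : Prop :=
  forall A, OpP c1 A ->
    AddP c0 (gamma M A) /\ val M (gamma M A) = val M A /\
    gamma M A < End M A /\
    ~ (exists R, RemP c1 R /\ gamma M R = gamma M A /\
                 gamma M A < R /\ R < A).

Definition A2 : Prop :=
  forall A B, OpP c0 B -> AddP c0 A -> A < B -> val M A = val M B ->
    exists R, RemP c1 R /\ A = gamma M R /\ R < End M B.

Definition arrow (a b : E) : Prop :=
  (CntP c1 b /\ a = gamma M b) \/
  (CntP c1 a /\ RemP c1 b /\ gamma M b = gamma M a) \/
  (CntP c0 b /\ RemP c1 a /\ val M a = val M b /\ ~ b < a /\ gamma M a < b) \/
  (CntP c0 a /\ AddP c0 b /\ val M a = val M b /\ ~ b < a).

Definition ltp (a b : E) : Prop := a < b \/ arrow a b.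

End LazySet.

(* Every event X gets a linearization point: a pair (a, k) of an action a
   between Begin X and End X and a tag k in {0, 1, 2} placing it just before,
   at, or just after a, ordered lexicographically.  An action is its own
   point; a successful Cnt is placed just after the Add gamma(C) it reads and
   before every Rem of gamma(C), which A1 permits; an unsuccessful Cnt is
   placed after the latest relevant Rem and before every relevant Add, which
   is possible because A1 and A2 force every such Rem to precede every such
   Add.  Both < and ==> then strictly increase points, so a cycle of <' would
   make a point precede itself. *)

From Stdlib Require Import List Arith Classical Lia.

Definition has_cycle {T : Type} (r : T -> T -> Prop) : Prop :=
  exists (n : nat) (X : nat -> T),
    1 <= n /\ X 0 = X n /\ (forall i, i < n -> r (X i) (X (S i))).

Lemma no_cycle_of_monotone_labelling {T U : Type}
    (r : T -> T -> Prop) (s : U -> U -> Prop) (label : T -> U -> Prop) :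
  (forall u, ~ s u u) ->
  (forall u v w, s u v -> s v w -> s u w) ->
  (forall x, exists u, label x u) ->
  (forall x y u v, r x y -> label x u -> label y v -> s u v) ->
  ~ has_cycle r.
Proof.
  intros s_irrefl s_trans label_ex label_mono [n [X [n_pos [X_cycle X_step]]]].
  destruct (label_ex (X 0)) as [u Hu].
  assert (from_start : forall k, 1 <= k <= n -> forall v, label (X k) v -> s u v).
  { induction k as [|k IH]; intros Hk v Hv; [lia|].
    destruct k as [|k].
    - exact (label_mono _ _ _ _ (X_step 0 ltac:(lia)) Hu Hv).
    - destruct (label_ex (X (S k))) as [w Hw].
      apply s_trans with w; [apply IH; [lia | exact Hw]|].
      exact (label_mono _ _ _ _ (X_step (S k) ltac:(lia)) Hw Hv). }
  apply (s_irrefl u), (from_start n); [lia|].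
  rewrite <- X_cycle; exact Hu.
Qed.

Lemma exists_max_in_list {T : Type} (r : T -> T -> Prop) (P : T -> Prop) :
  (forall x y z, r x y -> r y z -> r x z) ->
  (forall x y, P x -> P y -> r x y \/ x = y \/ r y x) ->
  forall l, (exists x, P x /\ In x l) ->
  exists m, P m /\ forall y, P y -> In y l -> r y m \/ y = m.
Proof.
  intros r_trans r_total.
  induction l as [|a l IH]; intros [x [Px Hx]]; [destruct Hx|].
  destruct (classic (exists x, P x /\ In x l)) as [[y Hy]|no_P_in_l].
  - destruct (IH (ex_intro _ y Hy)) as [m [Pm m_max]].
    destruct (classic (P a)) as [Pa|nPa].
    + destruct (r_total a m Pa Pm) as [Ham|[Ham|Hma]].
      * exists m; split; [exact Pm|]. intros z Pz [<-|Hz]; auto.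
      * exists m; split; [exact Pm|]. intros z Pz [<-|Hz]; auto.
      * exists a; split; [exact Pa|]. intros z Pz [<-|Hz]; [auto|].
        destruct (m_max z Pz Hz) as [Hzm| ->]; eauto.
    + exists m; split; [exact Pm|]. intros z Pz [<-|Hz]; [contradiction | auto].
  - destruct Hx as [<-|Hx]; [|exfalso; eauto].
    exists a; split; [exact Px|]. intros z Pz [<-|Hz]; [auto | exfalso; eauto].
Qed.

Definition lex_lt {T : Type} (r : T -> T -> Prop) (p q : T * nat) : Prop :=
  r (fst p) (fst q) \/ (fst p = fst q /\ snd p < snd q).

Lemma lex_lt_irrefl {T : Type} (r : T -> T -> Prop) :
  (forall x, ~ r x x) -> forall p, ~ lex_lt r p p.
Proof. intros r_irrefl p [H|[_ H]]; [exact (r_irrefl _ H) | lia]. Qed.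

Lemma lex_lt_trans {T : Type} (r : T -> T -> Prop) :
  (forall x y z, r x y -> r y z -> r x z) ->
  forall p q s, lex_lt r p q -> lex_lt r q s -> lex_lt r p s.
Proof.
  unfold lex_lt; intros r_trans p q s [H|[H H']] [K|[K K']].
  - left; eauto.
  - left; congruence.
  - left; congruence.
  - right; split; [congruence | lia].
Qed.

Lemma lex_lt_fst {T : Type} (r : T -> T -> Prop) a b i j :
  r a b -> lex_lt r (a, i) (b, j).
Proof. now left. Qed.

Lemma lex_lt_le {T : Type} (r : T -> T -> Prop) a b i j :
  r a b \/ a = b -> i < j -> lex_lt r (a, i) (b, j).
Proof. intros [H| <-] Hij; [now left | now right]. Qed.

Section LinearizationPoints.

Variable M : SysExec.
Hypothesis Hse : system_execution M.
Hypothesis HA0 : A0 M.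
Hypothesis HA1 : A1 M.
Hypothesis HA2 : A2 M.

Local Notation E := (Ev M).
Local Notation "x < y" := (lt M x y).
Local Notation "x <= y" := (lt M x y \/ x = y).
Local Notation Begin := (Begin M).
Local Notation End := (End M).
Local Notation gamma := (gamma M).
Local Notation stamp_lt := (lex_lt (lt M)).

Lemma ev_lt_irrefl x : ~ x < x.
Proof. now destruct Hse as [H _]. Qed.

Lemma ev_lt_trans x y z : x < y -> y < z -> x < z.
Proof. destruct Hse as [_ [H _]]; eauto. Qed.

Lemma finite_predecessors x : exists l : list E, forall y, y < x -> In y l.
Proof. now destruct Hse as [_ [_ [H _]]]. Qed.

Lemma act_begin_end e : Act M e -> Begin e = e /\ End e = e.
Proof. destruct Hse as [_ [_ [_ [_ [H _]]]]]; auto. Qed.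

Lemma lt_end_begin X Y : X < Y <-> End X < Begin Y.
Proof. now destruct Hse as [_ [_ [_ [_ [_ H]]]]]. Qed.

Lemma add_not_rem a : Add M a -> ~ Rem M a.
Proof. intros Ha Hr; destruct HA0 as [H _]; exact (H a (conj Ha Hr)). Qed.

Lemma add_act a : Add M a -> Act M a.
Proof. destruct HA0 as [_ [_ [_ [H _]]]]; auto. Qed.

Lemma rem_act a : Rem M a -> Act M a.
Proof. destruct HA0 as [_ [_ [_ [_ [H _]]]]]; auto. Qed.

Lemma cnt_not_act a : Cnt M a -> ~ Act M a.
Proof. destruct HA0 as [_ [_ [_ [_ [_ [H _]]]]]]; auto. Qed.

Lemma begin_end_act X : Act M (Begin X) /\ Act M (End X).
Proof. now destruct HA0 as [_ [_ [_ [_ [_ [_ [H _]]]]]]]. Qed.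

Lemma act_total a b : Act M a -> Act M b -> a < b \/ a = b \/ b < a.
Proof. destruct HA0 as [_ [_ [_ [_ [_ [_ [_ [_ H]]]]]]]]; auto. Qed.

Lemma ev_le_lt_trans x y z : x <= y -> y < z -> x < z.
Proof. intros [H| ->] K; [exact (ev_lt_trans _ _ _ H K) | exact K]. Qed.

Lemma ev_lt_le_trans x y z : x < y -> y <= z -> x < z.
Proof. intros H [K| <-]; [exact (ev_lt_trans _ _ _ H K) | exact H]. Qed.

Lemma begin_le_end X : Begin X <= End X.
Proof.
  destruct (begin_end_act X) as [HB HE].
  destruct (act_total _ _ HB HE) as [H|[H|H]]; auto.
  exfalso; apply (ev_lt_irrefl X), lt_end_begin, H.
Qed.

Lemma act_lt_begin X a : Act M a -> a < X -> a < Begin X.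
Proof. intros Ha H; apply lt_end_begin in H; now rewrite (proj2 (act_begin_end a Ha)) in H. Qed.

Lemma begin_le_act_of_not_lt X a : Act M a -> ~ a < X -> Begin X <= a.
Proof.
  intros Ha Hna; destruct (act_total _ _ (proj1 (begin_end_act X)) Ha) as [H|[H|H]]; auto.
  exfalso; apply Hna, lt_end_begin; now rewrite (proj2 (act_begin_end a Ha)).
Qed.

Lemma act_le_end_of_not_lt X a : Act M a -> ~ X < a -> a <= End X.
Proof.
  intros Ha Hna; destruct (act_total _ _ Ha (proj2 (begin_end_act X))) as [H|[H|H]]; auto.
  exfalso; apply Hna, lt_end_begin; now rewrite (proj1 (act_begin_end a Ha)).
Qed.

Lemma bounded_set_has_max (P : E -> Prop) b x :
  (forall y, P y -> Act M y) -> (forall y, P y -> y <= b) -> P x ->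
  exists m, P m /\ forall y, P y -> y <= m.
Proof.
  intros P_act P_bounded Px.
  destruct (finite_predecessors b) as [l Hl].
  assert (P_in : forall y, P y -> In y (b :: l)).
  { intros y Py; destruct (P_bounded y Py) as [H| ->]; [right; auto | now left]. }
  destruct (exists_max_in_list (lt M) P ev_lt_trans
              (fun y z Py Pz => act_total y z (P_act y Py) (P_act z Pz))
              (b :: l) (ex_intro _ x (conj Px (P_in x Px)))) as [m [Pm m_max]].
  exists m; split; [exact Pm|]. intros y Py; exact (m_max y Py (P_in y Py)).
Qed.

Lemma rem1_op1 R : RemP M c1 R -> OpP M c1 R.
Proof. intros [Hr Hc]; split; [right; left|]; assumption. Qed.

Lemma cnt1_op1 C : CntP M c1 C -> OpP M c1 C.
Proof. intros [HC Hc]; split; [right; right|]; assumption. Qed.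

Lemma op1_gamma A : OpP M c1 A ->
  AddP M c0 (gamma A) /\ val M (gamma A) = val M A /\ Act M (gamma A) /\ gamma A < End A.
Proof.
  intros HA; destruct (HA1 A HA) as [Hadd [Hval [Hlt _]]].
  split; [exact Hadd | split; [exact Hval | split; [exact (add_act _ (proj1 Hadd)) | exact Hlt]]].
Qed.

Lemma rem1_gamma_lt R : RemP M c1 R -> gamma R < R.
Proof.
  intros HR; destruct (op1_gamma R (rem1_op1 R HR)) as [_ [_ [_ H]]].
  now rewrite (proj2 (act_begin_end R (rem_act R (proj1 HR)))) in H.
Qed.

Lemma rem1_not_between_gamma_and_op R A :
  OpP M c1 A -> RemP M c1 R -> gamma R = gamma A -> R < A -> False.
Proof.
  intros HA HR Hg HRA; apply (proj2 (proj2 (proj2 (HA1 A HA)))).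
  exists R; repeat split; try apply HR; [exact Hg|rewrite <- Hg; apply rem1_gamma_lt, HR|exact HRA].
Qed.

Lemma cnt1_rem_after_gamma C R :
  CntP M c1 C -> RemP M c1 R -> gamma R = gamma C -> gamma C < R /\ ~ R < C.
Proof.
  intros HC HR Hg; split.
  - rewrite <- Hg; exact (rem1_gamma_lt R HR).
  - exact (rem1_not_between_gamma_and_op R C (cnt1_op1 C HC) HR Hg).
Qed.

Definition cnt0_rem (C R : E) : Prop :=
  RemP M c1 R /\ val M R = val M C /\ ~ C < R /\ gamma R < C.

Definition cnt0_add (C A : E) : Prop :=
  AddP M c0 A /\ val M C = val M A /\ ~ A < C.

(* If A < R, then A2 applied to gamma(R) < A yields a Rem of gamma(R) before A,
   hence strictly between gamma(R) and R, contradicting A1 for R. *)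
Lemma cnt0_rem_before_add C R A : cnt0_rem C R -> cnt0_add C A -> R < A.
Proof.
  intros [HR [HRv [_ HgC]]] [[Ha Hac] [HAv HnAC]].
  pose proof (rem_act R (proj1 HR)) as R_act.
  pose proof (add_act A Ha) as A_act.
  destruct (op1_gamma R (rem1_op1 R HR)) as [g_add [g_val [g_act _]]].
  assert (g_lt_A : gamma R < A).
  { exact (ev_lt_le_trans _ _ _ (act_lt_begin C _ g_act HgC)
             (begin_le_act_of_not_lt C A A_act HnAC)). }
  destruct (act_total _ _ R_act A_act) as [H|[<-|HAR]]; [exact H| |].
  - exfalso; exact (add_not_rem R Ha (proj1 HR)).
  - exfalso.
    destruct (HA2 (gamma R) A (conj (or_introl Ha) Hac) g_add g_lt_A)
      as [R' [HR' [Hg' HR'A]]]; [congruence|].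
    rewrite (proj2 (act_begin_end A A_act)) in HR'A.
    exact (rem1_not_between_gamma_and_op R' R (rem1_op1 R HR) HR'
             (eq_sym Hg') (ev_lt_trans _ _ _ HR'A HAR)).
Qed.

Record lin_point (X : E) (q : E * nat) : Prop := {
  lp_after_begin : Begin X <= fst q;
  lp_before_end : fst q <= End X;
  lp_act : Act M X -> q = (X, 1);
  lp_cnt1_gamma : CntP M c1 X -> stamp_lt (gamma X, 1) q;
  lp_cnt1_rem : CntP M c1 X -> forall R, RemP M c1 R -> gamma R = gamma X ->
    stamp_lt q (R, 1);
  lp_cnt0_rem : CntP M c0 X -> forall R, cnt0_rem X R -> stamp_lt (R, 1) q;
  lp_cnt0_add : CntP M c0 X -> forall A, cnt0_add X A -> stamp_lt q (A, 1)
}.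

Lemma lin_point_act X : Act M X -> lin_point X (X, 1).
Proof.
  intros HX; destruct (act_begin_end X HX) as [HB HE].
  split; simpl; try (intros [HC _]; exfalso; exact (cnt_not_act X HC HX)); auto.
Qed.

Lemma lin_point_of_cnt1 X q : CntP M c1 X ->
  Begin X <= fst q -> fst q <= End X ->
  stamp_lt (gamma X, 1) q ->
  (forall R, RemP M c1 R -> gamma R = gamma X -> stamp_lt q (R, 1)) ->
  lin_point X q.
Proof.
  intros HC HB HE Hg HR; split; auto.
  - intros HX; exfalso; exact (cnt_not_act X (proj1 HC) HX).
  - intros [_ H]; rewrite (proj2 HC) in H; discriminate H.
  - intros [_ H]; rewrite (proj2 HC) in H; discriminate H.
Qed.

Lemma lin_point_of_cnt0 X q : CntP M c0 X ->
  Begin X <= fst q -> fst q <= End X ->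
  (forall R, cnt0_rem X R -> stamp_lt (R, 1) q) ->
  (forall A, cnt0_add X A -> stamp_lt q (A, 1)) ->
  lin_point X q.
Proof.
  intros HC HB HE HR HA; split; auto.
  - intros HX; exfalso; exact (cnt_not_act X (proj1 HC) HX).
  - intros [_ H]; rewrite (proj2 HC) in H; discriminate H.
  - intros [_ H]; rewrite (proj2 HC) in H; discriminate H.
Qed.

Lemma lin_point_cnt1 X : CntP M c1 X -> exists q, lin_point X q.
Proof.
  intros HC.
  destruct (op1_gamma X (cnt1_op1 _ HC))
    as [_ [_ [g_act g_lt_end]]].
  destruct (classic (gamma X < Begin X)) as [g_lt_begin|g_not_lt_begin].
  - exists (Begin X, 0); apply lin_point_of_cnt1; simpl; auto.
    + exact (begin_le_end X).
    + exact (lex_lt_fst _ _ _ _ _ g_lt_begin).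
    + intros R HR Hg; apply lex_lt_le; [|lia].
      apply begin_le_act_of_not_lt; [exact (rem_act R (proj1 HR))|].
      exact (proj2 (cnt1_rem_after_gamma X R HC HR Hg)).
  - exists (gamma X, 2); apply lin_point_of_cnt1; simpl; auto.
    + destruct (act_total _ _ (proj1 (begin_end_act X)) g_act) as [H|[H|H]]; tauto.
    + apply lex_lt_le; [now right | lia].
    + intros R HR Hg; apply lex_lt_fst.
      exact (proj1 (cnt1_rem_after_gamma X R HC HR Hg)).
Qed.

Lemma lin_point_cnt0 X : CntP M c0 X -> exists q, lin_point X q.
Proof.
  intros HC.
  assert (rem_is_act : forall R, cnt0_rem X R -> Act M R).
  { intros R HR; exact (rem_act R (proj1 (proj1 HR))). }
  assert (rem_le_end : forall R, cnt0_rem X R -> R <= End X).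
  { intros R HR; exact (act_le_end_of_not_lt X R (rem_is_act R HR) (proj1 (proj2 (proj2 HR)))). }
  assert (begin_le_add : forall A, cnt0_add X A -> Begin X <= A).
  { intros A HA.
    exact (begin_le_act_of_not_lt X A (add_act A (proj1 (proj1 HA))) (proj2 (proj2 HA))). }
  destruct (classic (exists R, cnt0_rem X R /\ Begin X <= R)) as [[R0 [HR0 HB0]]|no_late_rem].
  - destruct (bounded_set_has_max (cnt0_rem X) (End X) R0 rem_is_act rem_le_end HR0)
      as [m [Hm m_max]].
    exists (m, 2); apply lin_point_of_cnt0; simpl; auto.
    + destruct HB0 as [H| ->]; [|exact (m_max R0 HR0)].
      left; exact (ev_lt_le_trans _ _ _ H (m_max R0 HR0)).
    + intros R HR; apply lex_lt_le; [exact (m_max R HR) | lia].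
    + intros A HA; apply lex_lt_fst; exact (cnt0_rem_before_add X m A Hm HA).
  - exists (Begin X, 0); apply lin_point_of_cnt0; simpl; auto.
    + exact (begin_le_end X).
    + intros R HR; apply lex_lt_fst.
      destruct (act_total _ _ (rem_is_act R HR) (proj1 (begin_end_act X))) as [H|[H|H]];
        [exact H | exfalso; apply no_late_rem; exists R; auto ..].
    + intros A HA; apply lex_lt_le; [exact (begin_le_add A HA) | lia].
Qed.

Lemma lin_point_exists X : exists q, lin_point X q.
Proof.
  destruct (classic (Act M X)) as [HX|HX]; [exists (X, 1); exact (lin_point_act X HX)|].
  destruct (classic (CntP M c1 X)) as [HC1|HC1]; [exact (lin_point_cnt1 X HC1)|].
  destruct (classic (CntP M c0 X)) as [HC0|HC0]; [exact (lin_point_cnt0 X HC0)|].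
  exists (Begin X, 1); split; simpl; try contradiction; auto.
  exact (begin_le_end X).
Qed.

Lemma lin_point_lt X Y p q : X < Y -> lin_point X p -> lin_point Y q -> stamp_lt p q.
Proof.
  intros HXY Hp Hq; apply lt_end_begin in HXY; left.
  apply (ev_lt_le_trans _ (Begin Y)); [|exact (lp_after_begin _ _ Hq)].
  exact (ev_le_lt_trans _ _ _ (lp_before_end _ _ Hp) HXY).
Qed.

Lemma lin_point_arrow X Y p q :
  arrow M X Y -> lin_point X p -> lin_point Y q -> stamp_lt p q.
Proof.
  intros Harr Hp Hq.
  destruct Harr as [[HC ->]|[[HC [HR Hg]]|[[HC [HR [Hv [HnYX Hg]]]]|[HC [HA [Hv HnYX]]]]]].
  - destruct (op1_gamma Y (cnt1_op1 _ HC))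
      as [_ [_ [g_act _]]].
    rewrite (lp_act _ _ Hp g_act); exact (lp_cnt1_gamma _ _ Hq HC).
  - rewrite (lp_act _ _ Hq (rem_act _ (proj1 HR))); exact (lp_cnt1_rem _ _ Hp HC Y HR Hg).
  - rewrite (lp_act _ _ Hp (rem_act _ (proj1 HR))).
    exact (lp_cnt0_rem _ _ Hq HC X (conj HR (conj Hv (conj HnYX Hg)))).
  - rewrite (lp_act _ _ Hq (add_act _ (proj1 HA))).
    exact (lp_cnt0_add _ _ Hp HC Y (conj HA (conj Hv HnYX))).
Qed.

End LinearizationPoints.

Theorem theorem3p8 (M : SysExec) :
  system_execution M -> A0 M -> A1 M -> A2 M ->
  ~ (exists (n : nat) (X : nat -> Ev M),
        1 <= n /\ X 0 = X n /\
        (forall i, i < n -> ltp M (X i) (X (S i)))).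
Proof.
  intros Hse HA0 HA1 HA2.
  apply (no_cycle_of_monotone_labelling (ltp M) (lex_lt (lt M)) (lin_point M)).
  - exact (lex_lt_irrefl _ (ev_lt_irrefl M Hse)).
  - exact (lex_lt_trans _ (ev_lt_trans M Hse)).
  - exact (lin_point_exists M Hse HA0 HA1 HA2).
  - intros X Y p q [Hlt|Harr].
    + exact (lin_point_lt M Hse X Y p q Hlt).
    + exact (lin_point_arrow M HA0 HA1 X Y p q Harr).
Qed.
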